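(* Let $G$ be a group with generating set $S$ not containing the identity. Then every color-permuting automorphism of the Cayley color digraph of $G$ with respect to $S$ is an isometry of $G$ with respect to the cardinal metric $d_C$.
   Context: The cardinal norm is $\|x\| = \min\{|A| : A\subseteq S,\ x\in\langle A\rangle\}$, where $\langle A\rangle$ is the subgroup generated by $A$, and $d_C(g,h)=\|g^{-1}h\|$. The Cayley color digraph has vertex set $G$ and, for each $x\in G$ and $c\in S$, an arc $(x,xc)$ of color $c$. A color-permuting automorphism is a digraph automorphism $\alpha$ (bijection of $G$ with $(x,y)$ an arc iff $(\alpha(x),\alpha(y))$ is an arc) for which there is a permutation $\sigma$ of $S$ such that, for all $x,y\in G$, $(x,y)$ has color $c$ iff $(\alpha(x),\alpha(y))$ has color $\sigma(c)$. *)

From Stdlib Require Import List Arith.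
Import ListNotations.

Section Defs.
Variables (T : Type) (mul : T -> T -> T) (inv : T -> T) (e : T).

Definition is_group : Prop :=
  (forall x y z, mul x (mul y z) = mul (mul x y) z) /\
  (forall x, mul e x = x) /\ (forall x, mul x e = x) /\
  (forall x, mul (inv x) x = e) /\ (forall x, mul x (inv x) = e).

Inductive gen (A : T -> Prop) : T -> Prop :=
  | gen_base : forall a, A a -> gen A a
  | gen_one : gen A e
  | gen_mul : forall x y, gen A x -> gen A y -> gen A (mul x y)
  | gen_inv : forall x, gen A x -> gen A (inv x).

Variable S : T -> Prop.

Definition generates : Prop := forall x, gen S x.

(* a finite subset A of S, given as a duplicate-free list, with x in <A> *)
Definition fin_sub_gen (l : list T) (x : T) : Prop :=
  NoDup l /\ Forall S l /\ gen (fun a => In a l) x.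

(* cardinal norm: ||x|| = n iff n = min{|A| : A subset S, x in <A>}.
   (Infinite A never realize the minimum, since x lies in the subgroup
   generated by a finite subset of S.) *)
Definition cnorm_is (x : T) (n : nat) : Prop :=
  (exists l, fin_sub_gen l x /\ length l = n) /\
  (forall l, fin_sub_gen l x -> n <= length l).

Definition dC_is (g h : T) (n : nat) : Prop := cnorm_is (mul (inv g) h) n.

Definition has_color (x y c : T) : Prop := S c /\ y = mul x c.
Definition arc (x y : T) : Prop := exists c, has_color x y c.

Definition bijective_map (f : T -> T) : Prop :=
  exists g, (forall x, g (f x) = x) /\ (forall y, f (g y) = y).

Definition perm_of_S (sigma : T -> T) : Prop :=
  (forall c, S c -> S (sigma c)) /\
  (forall c1 c2, S c1 -> S c2 -> sigma c1 = sigma c2 -> c1 = c2) /\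
  (forall d, S d -> exists c, S c /\ sigma c = d).

Definition color_permuting_aut (alpha : T -> T) : Prop :=
  bijective_map alpha /\
  (forall x y, arc x y <-> arc (alpha x) (alpha y)) /\
  exists sigma, perm_of_S sigma /\
    forall x y c, S c ->
      (has_color x y c <-> has_color (alpha x) (alpha y) (sigma c)).

Definition dC_isometry (alpha : T -> T) : Prop :=
  forall g h n, dC_is g h n <-> dC_is (alpha g) (alpha h) n.

End Defs.

(** A color-permuting automorphism [alpha] satisfies [alpha (x c) = alpha x * sigma c],
    and so does its inverse with [sigma^-1].  Hence if [g^-1 h] lies in the subgroup
    generated by a finite set [A] of generators, then [(alpha g)^-1 (alpha h)] lies in
    the subgroup generated by [sigma A], which has at most [|A|] elements.  Applying
    this to [alpha] and to its inverse shows that [alpha] preserves [d_C]. *)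

From Stdlib Require Import List Lia ClassicalEpsilon.
Import ListNotations.

Section ColorTransport.
Variables (T : Type) (mul : T -> T -> T) (inv : T -> T) (e : T).
Hypothesis group_T : is_group T mul inv e.
Variable S : T -> Prop.

Definition maps_colors (f : T -> T) : Prop :=
  forall d, S d -> exists c, S c /\ forall x, f (mul x d) = mul (f x) c.

Lemma gen_mono (A B : T -> Prop) :
  (forall a, A a -> B a) -> forall w, gen T mul inv e A w -> gen T mul inv e B w.
Proof.
  intros AB w Hw; induction Hw.
  - apply gen_base; auto.
  - apply gen_one.
  - apply gen_mul; auto.
  - apply gen_inv; auto.
Qed.

Lemma maps_colors_list (f : T -> T) : maps_colors f ->
  forall l, Forall S l -> exists l', Forall S l' /\ length l' = length l /\
    forall d, In d l -> exists c, In c l' /\ forall x, f (mul x d) = mul (f x) c.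
Proof.
  intros Hf l Hl; induction Hl as [|d l Hd _ IH].
  - exists []; repeat split; auto. intros d [].
  - destruct IH as [l' [Hl' [Hlen Hcol]]].
    destruct (Hf d Hd) as [c [Hc Hfc]].
    exists (c :: l'); repeat split; simpl; auto.
    intros d' [<- | Hd'].
    + exists c; auto.
    + destruct (Hcol d' Hd') as [c' [Hc' Hfc']]. exists c'; auto.
Qed.

Lemma gen_translate (f : T -> T) (A B : T -> Prop) :
  (forall d, A d -> exists c, B c /\ forall x, f (mul x d) = mul (f x) c) ->
  forall w, gen T mul inv e A w ->
  forall g, exists w', gen T mul inv e B w' /\ f (mul g w) = mul (f g) w'.
Proof.
  destruct group_T as [assoc [_ [mul_e [inv_l inv_r]]]].
  intros AB w Hw; induction Hw as [a Ha | | x y _ IHx _ IHy | x _ IHx]; intros g.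
  - destruct (AB a Ha) as [c [Hc Hfc]]. exists c; split; [apply gen_base |]; auto.
  - exists e; split; [apply gen_one |]. now rewrite !mul_e.
  - destruct (IHx g) as [x' [Hx' Hfx]].
    destruct (IHy (mul g x)) as [y' [Hy' Hfy]].
    exists (mul x' y'); split; [apply gen_mul; auto |].
    now rewrite assoc, Hfy, Hfx, assoc.
  - destruct (IHx (mul g (inv x))) as [x' [Hx' Hfx]].
    exists (inv x'); split; [apply gen_inv; auto |].
    rewrite <- assoc, inv_l, mul_e in Hfx.
    now rewrite Hfx, <- assoc, inv_r, mul_e.
Qed.

Lemma nodup_sublist (l : list T) :
  exists l', NoDup l' /\ (forall a, In a l' <-> In a l) /\ length l' <= length l.
Proof.
  pose proof (fun x y : T => excluded_middle_informative (x = y)) as eq_dec.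
  exists (nodup eq_dec l); repeat split.
  - apply NoDup_nodup.
  - apply nodup_In.
  - apply nodup_In.
  - apply NoDup_incl_length; [apply NoDup_nodup |].
    intros a; apply nodup_In.
Qed.

Lemma fin_sub_gen_transport (f : T -> T) : maps_colors f ->
  forall g h l, fin_sub_gen T mul inv e S l (mul (inv g) h) ->
  exists l', fin_sub_gen T mul inv e S l' (mul (inv (f g)) (f h)) /\
    length l' <= length l.
Proof.
  intros Hf g h l [_ [HS Hgen]].
  destruct (maps_colors_list f Hf l HS) as [l1 [HS1 [Hlen Hcol]]].
  destruct (gen_translate f _ _ Hcol _ Hgen g) as [w' [Hw' Hfw]].
  destruct group_T as [assoc [e_mul [_ [inv_l inv_r]]]].
  assert (Hfh : mul (inv (f g)) (f h) = w').
  { rewrite assoc, inv_r, e_mul in Hfw.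
    now rewrite Hfw, assoc, inv_l, e_mul. }
  destruct (nodup_sublist l1) as [l' [Hnd [Hin Hlen']]].
  exists l'; repeat split; [auto | | | lia].
  - rewrite Forall_forall in *. intros a Ha. apply HS1, Hin, Ha.
  - rewrite Hfh. apply (gen_mono _ _ (fun a Ha => proj2 (Hin a) Ha)), Hw'.
Qed.

Lemma cnorm_is_transfer (x y : T) (n : nat) :
  (forall l, fin_sub_gen T mul inv e S l x ->
     exists l', fin_sub_gen T mul inv e S l' y /\ length l' <= length l) ->
  (forall l, fin_sub_gen T mul inv e S l y ->
     exists l', fin_sub_gen T mul inv e S l' x /\ length l' <= length l) ->
  cnorm_is T mul inv e S x n -> cnorm_is T mul inv e S y n.
Proof.
  intros xy yx [[l [Hl Hn]] Hmin].
  destruct (xy l Hl) as [l' [Hl' Hlen]].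
  assert (Hmin' : forall l, fin_sub_gen T mul inv e S l y -> n <= length l).
  { intros l0 Hl0. destruct (yx l0 Hl0) as [l1 [Hl1 Hlen1]].
    specialize (Hmin l1 Hl1). lia. }
  split; [| exact Hmin'].
  exists l'; split; [exact Hl' |].
  specialize (Hmin' l' Hl'). lia.
Qed.

Lemma dC_is_transport (f f' : T -> T) :
  maps_colors f -> maps_colors f' -> (forall x, f' (f x) = x) ->
  forall g h n, dC_is T mul inv e S g h n -> dC_is T mul inv e S (f g) (f h) n.
Proof.
  intros Hf Hf' f'K g h n.
  apply cnorm_is_transfer.
  - apply fin_sub_gen_transport, Hf.
  - intros l Hl. rewrite <- (f'K g), <- (f'K h).
    apply (fin_sub_gen_transport f' Hf' _ _ l Hl).
Qed.

End ColorTransport.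

Lemma color_permuting_aut_maps_colors (T : Type) (mul : T -> T -> T)
  (S : T -> Prop) (alpha beta : T -> T) :
  color_permuting_aut T mul S alpha ->
  (forall y, alpha (beta y) = y) -> (forall x, beta (alpha x) = x) ->
  maps_colors T mul S alpha /\ maps_colors T mul S beta.
Proof.
  intros [_ [_ [sigma [[sigma_S [_ sigma_onto]] Hcol]]]] alphaK betaK.
  split.
  - intros d Hd. exists (sigma d); split; auto. intros x.
    apply (proj1 (Hcol x (mul x d) d Hd) (conj Hd eq_refl)).
  - intros d Hd. destruct (sigma_onto d Hd) as [c [Hc <-]].
    exists c; split; auto. intros x.
    destruct (proj1 (Hcol (beta x) (mul (beta x) c) c Hc) (conj Hc eq_refl))
      as [_ Hfc].
    rewrite alphaK in Hfc.
    now rewrite <- Hfc, betaK.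
Qed.

Theorem mainTheorem11 (T : Type) (mul : T -> T -> T) (inv : T -> T) (e : T)
  (S : T -> Prop) (alpha : T -> T) :
  is_group T mul inv e ->
  generates T mul inv e S ->
  ~ S e ->
  color_permuting_aut T mul S alpha ->
  dC_isometry T mul inv e S alpha.
Proof.
  intros group_T _ _ Halpha.
  destruct (proj1 Halpha) as [beta [betaK alphaK]].
  destruct (color_permuting_aut_maps_colors T mul S alpha beta Halpha alphaK betaK)
    as [Hcol_alpha Hcol_beta].
  intros g h n; split.
  - apply (dC_is_transport T mul inv e group_T S alpha beta); auto.
  - intros Hd.
    rewrite <- (betaK g), <- (betaK h).
    apply (dC_is_transport T mul inv e group_T S beta alpha); auto.
Qed.
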